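(* Let $Z$ be a convex subset of a real vector space $V$, and let $p:V\to[0,\infty)$ be a seminorm such that $p(x)\leq a$ for all $x\in Z$, for some $a\geq 0$. Then for all $x,y\in Z$, $$p(x-y)\leq 2a\big(1-t_y(x)\big)\leq 2a\big(1-b(y)\big).$$
   Context: The weight function is $t_y(x)=\sup\{0\leq t<1 : \frac{y-tx}{1-t}\in Z\}$ for $x,y\in Z$, and the boundariness of $y\in Z$ is $b(y)=\inf_{x\in Z}t_y(x)$. *)

From HB Require Import structures.
From mathcomp Require Import all_boot all_order all_algebra.
From mathcomp Require Import all_classical all_reals.
Set Implicit Arguments. Unset Strict Implicit. Unset Printing Implicit Defensive.
Import Order.TTheory GRing.Theory Num.Theory.
Local Open Scope classical_set_scope.
Local Open Scope ring_scope.

Definition convex_set (R : realType) (V : lmodType R) (Z : set V) : Prop :=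
  forall x y, Z x -> Z y -> forall t : R, 0 <= t <= 1 ->
    Z (t *: x + (1 - t) *: y).

Definition seminorm (R : realType) (V : lmodType R) (p : V -> R) : Prop :=
  (forall x, 0 <= p x) /\
  (forall x y, p (x + y) <= p x + p y) /\
  (forall (c : R) x, p (c *: x) = `|c| * p x).

Definition weight (R : realType) (V : lmodType R) (Z : set V) (y x : V) : R :=
  sup [set t : R | 0 <= t < 1 /\ Z ((1 - t)^-1 *: (y - t *: x))].

Definition boundariness (R : realType) (V : lmodType R) (Z : set V) (y : V) : R :=
  inf [set weight Z y x | x in Z].

From HB Require Import structures.
From mathcomp Require Import all_boot all_order all_algebra.
From mathcomp Require Import all_classical all_reals.
Set Implicit Arguments.
Unset Strict Implicit.
Unset Printing Implicit Defensive.

Import Order.TTheory GRing.Theory Num.Theory.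
Local Open Scope classical_set_scope.
Local Open Scope ring_scope.

(* If [t] is admissible for [t_y(x)], i.e. [z = (y - t x)/(1 - t)] lies in [Z],
   then [y] is the convex combination [t x + (1 - t) z], so
   [x - y = (1 - t)(x - z)] and [p(x - y) <= (1 - t) 2a].  Taking the supremum
   over admissible [t] gives the first inequality; the second holds because
   [b(y)] is an infimum of weights, all of which are nonnegative. *)

Section Seminorm.
Variables (R : realType) (V : lmodType R) (p : V -> R).
Hypothesis p_seminorm : seminorm p.

Lemma seminormN (x : V) : p (- x) = p x.
Proof.
case: p_seminorm => _ [_ pZ].
by rewrite -scaleN1r pZ normrN normr1 mul1r.
Qed.

Lemma seminormB_le (x z : V) : p (x - z) <= p x + p z.
Proof.
case: p_seminorm => _ [pD _].
by rewrite -(seminormN z); apply: pD.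
Qed.

End Seminorm.

Lemma le_1Bsup_mul (R : realType) (S : set R) (c d : R) :
  S !=set0 -> 0 <= d ->
  (forall t, S t -> c <= (1 - t) * d) -> c <= (1 - sup S) * d.
Proof.
move=> [t0 St0] d_ge0 cS.
have [d0|d_neq0] := eqVneq d 0.
  by have := cS t0 St0; rewrite d0 !mulr0.
have d_gt0 : 0 < d by rewrite lt_neqAle eq_sym d_neq0.
have supS : sup S <= 1 - c / d.
  apply: ge_sup; first by exists t0.
  by move=> t /cS ct; rewrite lerBrDl -lerBrDr ler_pdivrMr.
by rewrite -[c](divfK (lt0r_neq0 d_gt0)) ler_wpM2r // lerBrDl -lerBrDr.
Qed.

Lemma subr_scaleV_decomp (R : fieldType) (V : lmodType R) (x y : V) (t : R) :
  1 - t != 0 -> x - y = (1 - t) *: (x - (1 - t)^-1 *: (y - t *: x)).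
Proof.
move=> t1_neq0; rewrite scalerBr scalerA mulfV // scale1r scalerBl scale1r.
by rewrite opprB addrA subrK.
Qed.

Section Weight.
Variables (R : realType) (V : lmodType R) (Z : set V).

Definition weight_set (y x : V) : set R :=
  [set t : R | 0 <= t < 1 /\ Z ((1 - t)^-1 *: (y - t *: x))].

Lemma weightE (y x : V) : weight Z y x = sup (weight_set y x).
Proof. by []. Qed.

Lemma weight_set0 (y x : V) : Z y -> weight_set y x 0.
Proof.
move=> Zy; split; first by rewrite lexx ltr01.
by rewrite subr0 invr1 scale1r scale0r subr0.
Qed.

Lemma weight_set_ubound (y x : V) : has_ubound (weight_set y x).
Proof. by exists 1 => t [/andP[_ /ltW]]. Qed.

Lemma weight_ge0 (y x : V) : Z y -> 0 <= weight Z y x.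
Proof.
move=> Zy; rewrite weightE.
exact: (ub_le_sup (weight_set_ubound y x) (weight_set0 x Zy)).
Qed.

Lemma boundariness_le_weight (y x : V) :
  Z x -> Z y -> boundariness Z y <= weight Z y x.
Proof.
move=> Zx Zy; apply: ge_inf; last by exists x.
by exists 0 => _ [x' _ <-]; exact: weight_ge0.
Qed.

Lemma seminorm_weight_set_le (p : V -> R) (a : R) (y x : V) (t : R) :
  seminorm p -> (forall z, Z z -> p z <= a) -> Z x -> weight_set y x t ->
  p (x - y) <= (1 - t) * (2 * a).
Proof.
move=> p_seminorm pZa Zx [/andP[_ t_lt1] Zz].
have t1_ge0 : 0 <= 1 - t by rewrite subr_ge0 ltW.
have t1_neq0 : 1 - t != 0 by rewrite subr_eq0 eq_sym lt_eqF.
have [_ [_ pZ]] := p_seminorm.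
rewrite (subr_scaleV_decomp x y t1_neq0) pZ ger0_norm //.
apply: ler_wpM2l => //; apply: le_trans (seminormB_le p_seminorm _ _) _.
by rewrite mulr2n mulrDl !mul1r lerD ?pZa.
Qed.

End Weight.

Theorem proposition2 (R : realType) (V : lmodType R) (Z : set V) (p : V -> R)
  (a : R) :
  convex_set Z -> seminorm p -> 0 <= a -> (forall x, Z x -> p x <= a) ->
  forall x y, Z x -> Z y ->
    p (x - y) <= 2 * a * (1 - weight Z y x) /\
    2 * a * (1 - weight Z y x) <= 2 * a * (1 - boundariness Z y).
Proof.
move=> _ p_seminorm a_ge0 pZa x y Zx Zy.
have a2_ge0 : 0 <= 2 * a by rewrite mulr_ge0.
split.
  rewrite mulrC weightE; apply: le_1Bsup_mul a2_ge0 _.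
  - by exists 0; exact: weight_set0.
  - by move=> t; exact: seminorm_weight_set_le.
apply: ler_wpM2l; first exact: a2_ge0.
by rewrite lerD2l lerN2 boundariness_le_weight.
Qed.
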